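(* Let $\tau \ge 0$ be rational and let $(G,k)$ be an instance of $\tau$-Bounded-Density Edge Deletion, where $G$ has $m_G$ edges. Construct the 2-Layer General Transshipment instance $(D, c, \mathcal{B})$ as follows: $V(D) = V(G) \cup E(G)$ with $U = E(G)$ and $W = V(G)$; for every edge $e = \{u,v\} \in E(G)$ add the arcs $(e,u)$ and $(e,v)$ with capacity $1$; set $B_e = \{0,1\}$ for every $e \in E(G)$ and $B_v = [-\tau, 0]$ for every $v \in V(G)$. Then there is a $\mathcal{B}$-transshipment $f$ in $D$ with $\mathrm{val}(f) \ge m_G - k$ if and only if there is an edge set $F \subseteq E(G)$ with $|F| \le k$ and $\rho^*(G - F) \le \tau$.
   Context: Graphs are simple and undirected; the density of a graph with $n$ vertices and $m$ edges is $m/n$ (the empty graph has density $0$) and $\rho^*(G)$ is the maximum density of a subgraph of $G$. The problem $\tau$-Bounded-Density Edge Deletion asks, given $G$ and $k \in \mathbb{N}$, whether some $F \subseteq E(G)$ with $|F| \le k$ satisfies $\rho^*(G-F) \le \tau$. A digraph $D$ is 2-layered with parts $U, W$ if $V(D) = U \cup W$ is a disjoint union and $A(D) \subseteq U \times W$. An instance of 2-Layer General Transshipment consists of a 2-layered digraph $D$ with parts $U,W$, capacities $c: A(D) \to \mathbb{Q}_{\ge 0}$, and a collection $\mathcal{B} = \{B_v : v \in V(D)\}$ with $B_v \subseteq \mathbb{Q}_{\ge 0}$ for $v \in U$ and $B_v \subseteq \mathbb{Q}_{\le 0}$ for $v \in W$. For a function $f: A(D) \to \mathbb{Q}_{\ge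 0}$, the excess at $v$ is $f_\Sigma(v) = \sum_{(v,x) \in A(D)} f(v,x) - \sum_{(x,v) \in A(D)} f(x,v)$. A $\mathcal{B}$-transshipment is a function $f: A(D) \to \mathbb{Q}_{\ge 0}$ with $f(a) \le c(a)$ for all arcs $a$ and $f_\Sigma(v) \in B_v$ for all $v \in V(D)$. Its value is $\mathrm{val}(f) = \sum_{u \in U} f_\Sigma(u)$. The problem is to find a $\mathcal{B}$-transshipment of maximum value. *)

From HB Require Import structures.
From mathcomp Require Import all_boot all_order all_algebra.
Set Implicit Arguments. Unset Strict Implicit. Unset Printing Implicit Defensive.
Import Order.TTheory GRing.Theory Num.Theory.
Local Open Scope ring_scope.

(* A simple undirected graph on the finite vertex type V is given by its edge
   set E : {set {set V}}, every edge being a 2-element vertex set. *)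
Definition simple_edges (V : finType) (E : {set {set V}}) : Prop :=
  forall e, e \in E -> #|e| = 2%N.

Definition is_subgraph (V : finType) (E : {set {set V}})
    (S : {set V}) (E' : {set {set V}}) : bool :=
  (E' \subset E) && [forall e in E', e \subset S].

Definition density (n m : nat) : rat :=
  if n == 0%N then 0 else (m%:R / n%:R).

(* rho*(G): maximum density of a subgraph of G (all densities are >= 0, and
   the empty subgraph has density 0, so 0 is a neutral start value). *)
Definition rho_star (V : finType) (E : {set {set V}}) : rat :=
  \big[Num.max/0]_(S : {set V})
    \big[Num.max/0]_(E' : {set {set V}} | is_subgraph E S E')
      density #|S| #|E'|.

Definition del_edges (V : finType) (E F : {set {set V}}) : {set {set V}} :=
  E :\: F.

(* A 2-layered digraph with parts U ⊆ TU, W ⊆ TW (disjoint as they live in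
   different types), arcs A ⊆ U × W, capacities c, and sets B_v given as
   predicates on rat. A flow is a function f on arcs (values off A are
   irrelevant). *)
Section Transshipment.
Variables (TU TW : finType) (U : {set TU}) (W : {set TW})
  (A : {set TU * TW}) (c : TU * TW -> rat)
  (BU : TU -> rat -> Prop) (BW : TW -> rat -> Prop).

(* excess at u in U: outgoing minus incoming (no incoming arcs) *)
Definition excessU (f : TU * TW -> rat) (u : TU) : rat :=
  \sum_(a in A | a.1 == u) f a.
(* excess at w in W: outgoing (none) minus incoming *)
Definition excessW (f : TU * TW -> rat) (w : TW) : rat :=
  - \sum_(a in A | a.2 == w) f a.

Definition is_B_transshipment (f : TU * TW -> rat) : Prop :=
  [/\ (forall a, a \in A -> 0 <= f a /\ f a <= c a),
      (forall u, u \in U -> BU u (excessU f u)) &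
      (forall w, w \in W -> BW w (excessW f w))].

Definition ts_value (f : TU * TW -> rat) : rat := \sum_(u in U) excessU f u.
End Transshipment.

Section Construction.
Variables (V : finType) (E : {set {set V}}) (tau : rat).
Definition D_U : {set {set V}} := E.
Definition D_W : {set V} := [set: V].
Definition D_arcs : {set {set V} * V} := [set a | (a.1 \in E) && (a.2 \in a.1)].
Definition D_cap : {set V} * V -> rat := fun _ => 1.
Definition D_BU : {set V} -> rat -> Prop := fun _ x => x = 0 \/ x = 1.
Definition D_BW : V -> rat -> Prop := fun _ x => - tau <= x /\ x <= 0.
End Construction.

(* Given a transshipment f, the edges of excess 1 are kept and those of
   excess 0 form the deleted set F, so val f = |E \ F|.  On the kept edges f
   is a fractional orientation: every edge splits one unit between its two
   endpoints and every vertex receives at most tau.  Such an orientation of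
   G - F exists iff every subgraph (S, E') of G - F has |E'| <= tau |S|, i.e.
   iff rho*(G - F) <= tau.  Necessity is double counting; sufficiency is Hall's
   theorem with supplies and demands, applied after writing tau = n / q, with
   demand q on every edge and capacity n on every vertex. *)

From HB Require Import structures.
From mathcomp Require Import all_boot all_order all_algebra.
From mathcomp Require Import zify.
Set Implicit Arguments. Unset Strict Implicit. Unset Printing Implicit Defensive.
Import Order.TTheory GRing.Theory Num.Theory.
Local Open Scope ring_scope.

Section NatSums.
Local Open Scope nat_scope.
Variable T : finType.

Lemma leq_sum_subpred (P Q : pred T) (F : T -> nat) :
  (forall t, P t -> Q t) -> \sum_(t | P t) F t <= \sum_(t | Q t) F t.
Proof. exact: (sub_le_big leqnn (fun m n => leq_addr n m)). Qed.

Definition restrict (A : {set T}) (h : T -> nat) (t : T) : nat :=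
  if t \in A then h t else 0.

Lemma sum_restrict (A B : {set T}) (h : T -> nat) :
  \sum_(t in A) restrict B h t = \sum_(t in A :&: B) h t.
Proof.
rewrite big_mkcond [RHS]big_mkcond; apply: eq_bigr => t _.
by rewrite /restrict inE; case: (t \in A); case: (t \in B).
Qed.

Lemma sum_restrictT (B : {set T}) (h : T -> nat) :
  \sum_t restrict B h t = \sum_(t in B) h t.
Proof. by rewrite [RHS]big_mkcond. Qed.

Lemma restrictC (A : {set T}) (h : T -> nat) (t : T) :
  restrict A h t + restrict (~: A) h t = h t.
Proof. by rewrite /restrict inE; case: (t \in A); rewrite ?addn0. Qed.

Lemma sum_subn_eq1 (P : {pred T}) (h : T -> nat) (x : T) : 0 < h x ->
  \sum_(t | P t) (h t - (t == x)) + P x = \sum_(t | P t) h t.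
Proof.
move=> hx; have [Px | nPx] := boolP (P x).
  rewrite (bigD1 x) //= [RHS](bigD1 x) //= eqxx.
  rewrite (eq_bigr h); first by lia.
  by move=> t /andP[_ /negbTE ->]; rewrite subn0.
rewrite addn0; apply: eq_bigr => t Pt.
by case: eqP => [tx | _]; [rewrite -tx Pt in nPx | rewrite subn0].
Qed.

End NatSums.

Section Allocation.
Local Open Scope nat_scope.
Variables (X Y : finType) (adj : X -> Y -> bool).

Definition nbh (Z : {set X}) : {set Y} := [set y | [exists x in Z, adj x y]].

Lemma nbhS (A B : {set X}) : A \subset B -> nbh A \subset nbh B.
Proof.
move/subsetP=> sAB; apply/subsetP => y; rewrite !inE => /exists_inP[x xA axy].
by apply/exists_inP; exists x; rewrite ?sAB.
Qed.

Lemma nbhU (A B : {set X}) : nbh (A :|: B) = nbh A :|: nbh B.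
Proof.
apply/setP => y; rewrite !inE; apply/exists_inP/orP.
  by case=> x; rewrite inE => /orP[xA | xB] axy; [left | right];
    apply/exists_inP; exists x.
by case=> /exists_inP[x xAB axy]; exists x; rewrite // inE xAB ?orbT.
Qed.

Lemma nbh_mem (Z : {set X}) x y : x \in Z -> adj x y -> y \in nbh Z.
Proof. by move=> xZ axy; rewrite inE; apply/exists_inP; exists x. Qed.

Definition hall_condition (d : X -> nat) (c : Y -> nat) : Prop :=
  forall Z : {set X}, \sum_(x in Z) d x <= \sum_(y in nbh Z) c y.

Definition allocation (d : X -> nat) (c : Y -> nat) (g : X -> Y -> nat) :=
  [/\ forall x y, ~~ adj x y -> g x y = 0,
      forall x, \sum_y g x y = d x &
      forall y, \sum_x g x y <= c y].

Lemma allocation_add d1 d2 d c1 c2 c g1 g2 :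
  allocation d1 c1 g1 -> allocation d2 c2 g2 ->
  (forall x, d x = d1 x + d2 x) -> (forall y, c1 y + c2 y <= c y) ->
  allocation d c (fun x y => g1 x y + g2 x y).
Proof.
move=> [adj1 row1 col1] [adj2 row2 col2] dE cE; split.
- by move=> x y axy; rewrite adj1 ?adj2.
- by move=> x; rewrite big_split /= row1 row2 dE.
- by move=> y; rewrite big_split /=; apply: leq_trans (leq_add (col1 y) (col2 y)) _.
Qed.

Lemma allocation_unit x y : adj x y ->
  allocation (fun z => z == x) (fun w => w == y) (fun z w => (z == x) && (w == y)).
Proof.
have sum_eq1 (T : finType) (P : pred T) (t : T) :
    \sum_(s | P s) (s == t) = P t.
  rewrite big_mkcond (bigD1 t) //= eqxx big1 ?addn0; first by case: (P t).
  by move=> s /negbTE ->; case: (P s).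
move=> axy; split.
- by move=> z w; case: eqP => [-> | //]; case: eqP => [-> | //]; rewrite axy.
- by move=> z; case: (z == x); rewrite ?sum_eq1 ?big1.
- move=> w; case: (w == y); last by rewrite big1 // => z _; rewrite andbF.
  by under eq_bigr do rewrite andbT; rewrite sum_eq1.
Qed.

Lemma row_sum_adj d c g x : allocation d c g -> \sum_(y | adj x y) g x y = d x.
Proof.
case=> g_adj row _; rewrite -row [RHS](bigID (adj x)) /= [X in _ + X]big1 ?addn0 //.
by move=> y; apply: g_adj.
Qed.

Lemma hall_condition_restrict d c (Z : {set X}) :
  hall_condition d c -> hall_condition (restrict Z d) (restrict (nbh Z) c).
Proof.
move=> hc W; rewrite !sum_restrict; apply: leq_trans (hc _) _.
by apply/leq_sum_subpred/subsetP; rewrite subsetI !nbhS ?subsetIl ?subsetIr.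
Qed.

Lemma hall_condition_contract d c (Z : {set X}) :
  hall_condition d c -> \sum_(x in Z) d x = \sum_(y in nbh Z) c y ->
  hall_condition (restrict (~: Z) d) (restrict (~: nbh Z) c).
Proof.
move=> hc tight W; rewrite !sum_restrict -!setDE.
have := hc (W :|: Z); rewrite nbhU (big_setID Z) [in X in _ <= X](big_setID (nbh Z)) /=.
by rewrite !setDUl !setDv !setU0 !(setIidPr (subsetUr _ _)) tight leq_add2l.
Qed.

Definition proper_tight d c (Z : {set X}) : bool :=
  [&& 0 < \sum_(x in Z) d x, \sum_(x in Z) d x < \sum_x d x
    & \sum_(x in Z) d x == \sum_(y in nbh Z) c y].

Lemma hall_condition_decr d c (x : X) (y : Y) :
  hall_condition d c -> ~~ [exists Z, proper_tight d c Z] ->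
  adj x y -> 0 < d x -> 0 < c y ->
  hall_condition (fun z => d z - (z == x)) (fun w => c w - (w == y)).
Proof.
move=> hc no_tight axy dx cy W.
have := sum_subn_eq1 (fun t => t \in W) dx.
have := sum_subn_eq1 (fun t => t \in nbh W) cy.
have := hc W => /=.
have [xW | xW] := boolP (x \in W); first by rewrite (nbh_mem xW axy); lia.
have [yN | yN] := boolP (y \in nbh W); last by lia.
suff : \sum_(z in W) d z < \sum_(w in nbh W) c w by lia.
have [->|Wpos] := posnP (\sum_(z in W) d z).
  by apply: leq_trans cy _; rewrite (bigD1 y) //= leq_addr.
have W_proper : \sum_(z in W) d z < \sum_z d z.
  rewrite [X in _ < X](bigID (mem (x |: W))) /= big_setU1 //=.
  by move: dx; lia.
rewrite ltn_neqAle hc andbT; apply: contraNneq no_tight => tight.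
by apply/existsP; exists W; rewrite /proper_tight Wpos W_proper tight /=.
Qed.

(* Induction on the total demand: either a proper tight set Z splits the
   problem into Z against nbh Z and the rest against the rest, or no set is
   tight and one unit can be sent along any edge x y without breaking the
   Hall condition. *)
Theorem hall_allocation d c : hall_condition d c -> exists g, allocation d c g.
Proof.
have [n] := ubnP (\sum_x d x); elim: n d c => // n IH d c Dn hc.
have [D0 | Dpos] := posnP (\sum_x d x).
  have d0 x : d x = 0.
    by apply/eqP; move/eqP: D0; rewrite sum_nat_eq0 => /forallP/(_ x).
  by exists (fun _ _ => 0); split=> [||y] //; [move=> x; rewrite d0 | ]; rewrite big1.
have [/existsP[Z /and3P[Zpos ZD /eqP tight]] | no_tight] :=
  boolP [exists Z, proper_tight d c Z].
  have [|g1 alloc1] := IH (restrict Z d) _ _ (hall_condition_restrict Z hc).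
    by rewrite sum_restrictT; lia.
  have [|g2 alloc2] := IH (restrict (~: Z) d) _ _ (hall_condition_contract hc tight).
    move: Dn Zpos; rewrite -[\sum_x d x](eq_bigr _ (fun t _ => restrictC Z d t)).
    by rewrite big_split /= !sum_restrictT; lia.
  exists (fun x y => g1 x y + g2 x y).
  by apply: allocation_add alloc1 alloc2 _ _ => [x | y]; rewrite restrictC.
have [x dx] : exists x, 0 < d x.
  by move: Dpos; rewrite lt0n sum_nat_seq_neq0 => /hasP[x _ dx]; exists x; rewrite lt0n.
have [y axy cy] : exists2 y, adj x y & 0 < c y.
  have := hc [set x]; rewrite big_set1 => /(leq_trans dx).
  rewrite lt0n sum_nat_seq_neq0 => /hasP[y _ /andP[]].
  by rewrite inE => /exists_inP[_ /set1P-> axy] cy; exists y; rewrite // lt0n.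
have [|g alloc] := IH _ _ _ (hall_condition_decr hc no_tight axy dx cy).
  by have := sum_subn_eq1 xpredT dx; lia.
exists (fun z w => g z w + ((z == x) && (w == y))).
apply: allocation_add alloc (allocation_unit axy) _ _ => [z | w].
  by case: eqP => [-> | _]; rewrite ?subn0 ?addn0 //; lia.
by case: eqP => [-> | _]; rewrite ?subn0 ?addn0 //; lia.
Qed.

End Allocation.

Lemma sum_pairs (I J : finType) (P : pred (I * J)) (h : I * J -> rat) :
  \sum_(p | P p) h p = \sum_i \sum_(j | P (i, j)) h (i, j).
Proof. by rewrite pair_big_dep; apply: eq_big => -[i j]. Qed.

Lemma ler_sum_subpred (I : finType) (P Q : pred I) (F : I -> rat) :
  (forall i, P i -> Q i) -> (forall i, Q i -> 0 <= F i) ->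
  \sum_(i | P i) F i <= \sum_(i | Q i) F i.
Proof.
move=> PQ F0; rewrite [X in X <= _]big_mkcond [X in _ <= X]big_mkcond.
apply: ler_sum => i _; have [/PQ -> // | _] := boolP (P i).
by case: ifP => // /F0.
Qed.

Lemma rat_nat_ratio (r : rat) : 0 <= r -> exists n q : nat, (0 < q)%N /\ r = n%:R / q%:R.
Proof.
move=> r0; exists `|numq r|%N, `|denq r|%N; split; first by rewrite absz_gt0 denq_neq0.
by rewrite !natr_absz !ger0_norm ?numq_ge0 ?denq_ge0 // divq_num_den.
Qed.

Section Density.
Variables (V : finType) (E : {set {set V}}).

Lemma simple_edgesD (F : {set {set V}}) : simple_edges E -> simple_edges (E :\: F).
Proof. by move=> HE e; rewrite inE => /andP[_ /HE]. Qed.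

Lemma rho_star_leP (tau : rat) : simple_edges E -> 0 <= tau ->
  reflect (forall S E', is_subgraph E S E' -> #|E'|%:R <= tau * #|S|%:R)
          (rho_star E <= tau).
Proof.
move=> HE tau0; apply: (iffP idP) => [rho S E' sub | bound].
  have [S0 | Spos] := posnP #|S|.
    suff -> : #|E'| = 0%N by rewrite S0 mulr0.
    apply: eq_card0 => e; apply/negP => eE'.
    case/andP: sub => /subsetP/(_ e eE')/HE e2 /forall_inP/(_ e eE')/subset_leq_card.
    by rewrite S0 e2.
  have : density #|S| #|E'| <= tau.
    apply: le_trans rho; apply: le_trans (le_bigmax_cond _ _ (isT : xpredT S)).
    exact: (le_bigmax_cond _ _ sub).
  by rewrite /density eqn0Ngt Spos /= ler_pdivrMr ?ltr0n.
apply: bigmax_le => // S _; apply: bigmax_le => // E' sub; rewrite /density.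
by case: eqP => [// | /eqP S0]; rewrite ler_pdivrMr ?ltr0n ?lt0n // bound.
Qed.

Definition fractional_orientation (tau : rat) (w : {set V} * V -> rat) : Prop :=
  [/\ forall e v, e \in E -> v \in e -> 0 <= w (e, v),
      forall e, e \in E -> \sum_(v in e) w (e, v) = 1 &
      forall v, \sum_(e in E | v \in e) w (e, v) <= tau].

Lemma orientation_subgraph_bound tau w S E' :
  fractional_orientation tau w -> is_subgraph E S E' -> #|E'|%:R <= tau * #|S|%:R.
Proof.
case=> w0 w1 load /andP[/subsetP sE' /forall_inP sES].
have -> : #|E'|%:R = \sum_(e in E') \sum_(v in S | v \in e) w (e, v).
  rewrite -[LHS]mulr1n -sumr_const; apply: eq_bigr => e eE'; rewrite -(w1 e (sE' e eE')).
  by apply: eq_bigl => v; rewrite andb_idl // => /(subsetP (sES e eE')).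
rewrite (exchange_big_dep (mem S)) /=; last by move=> e v _ /andP[].
rewrite mulr_natr -sumr_const.
apply: ler_sum => v vS; apply: le_trans (load v).
apply: ler_sum_subpred => [e /and3P[/sE' -> _ ->] // | e /andP[eE ve]].
exact: w0.
Qed.

Lemma orientation_of_subgraph_bound tau : simple_edges E -> 0 <= tau ->
  (forall S E', is_subgraph E S E' -> #|E'|%:R <= tau * #|S|%:R) ->
  exists w, fractional_orientation tau w.
Proof.
move=> HE tau0; have [n [q [q0 ->]]] := rat_nat_ratio tau0; move=> bound.
pose adj (e : {set V}) (v : V) := v \in e.
have hc : hall_condition adj (restrict E (fun=> q)) (fun=> n).
  move=> Z; rewrite sum_restrict !sum_nat_const.
  have sub : is_subgraph E (nbh adj (Z :&: E)) (Z :&: E).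
    rewrite /is_subgraph subsetIr; apply/forall_inP => e eZE.
    by apply/subsetP => v ve; exact: nbh_mem eZE ve.
  have := bound _ _ sub; rewrite mulrAC ler_pdivlMr ?ltr0n // -!natrM ler_nat.
  move/leq_trans; apply; rewrite mulnC leq_mul2r subset_leq_card ?orbT //.
  exact/nbhS/subsetIl.
have [g alloc] := hall_allocation hc.
exists (fun a => (g a.1 a.2)%:R / q%:R); split => [e v _ _ | e eE | v] /=.
- by rewrite divr_ge0 ?ler0n.
- rewrite -mulr_suml -natr_sum (row_sum_adj _ alloc) /restrict eE.
  by rewrite divff // pnatr_eq0 -lt0n.
- rewrite -mulr_suml -natr_sum ler_pM2r ?invr_gt0 ?ltr0n // ler_nat.
  case: alloc => _ _ /(_ v); apply: leq_trans.
  by apply: leq_sum_subpred => e /andP[].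
Qed.

End Density.

Section Construction.
Variables (V : finType) (E : {set {set V}}) (tau : rat).
Implicit Types (f : {set V} * V -> rat) (F : {set {set V}}).

Local Notation is_B_ts := (is_B_transshipment (D_U E) (D_W V) (D_arcs E)
  (@D_cap V) (@D_BU V) (@D_BW V tau)).
Local Notation value := (ts_value (D_U E) (D_arcs E)).

Lemma excessU_arcs f e : e \in E ->
  excessU (D_arcs E) f e = \sum_(v in e) f (e, v).
Proof.
move=> eE; rewrite /excessU sum_pairs (bigD1 e) //= [X in _ + X]big1 ?addr0 => [|e' ne'].
  by apply: eq_bigl => v; rewrite !inE /= eqxx eE andbT.
by rewrite big_pred0 // => v; rewrite (negbTE ne') andbF.
Qed.

Lemma excessW_arcs f v :
  excessW (D_arcs E) f v = - \sum_(e in E | v \in e) f (e, v).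
Proof.
rewrite /excessW sum_pairs [in RHS]big_mkcond; congr (- _); apply: eq_bigr => e _ /=.
have [ev | ev] := boolP ((e \in E) && (v \in e)).
  rewrite (big_pred1 v) // => u; rewrite !inE /=.
  by case: eqP => [->|]; rewrite ?ev ?andbF.
apply: big_pred0 => u; rewrite !inE /=.
by case: eqP => [->|]; rewrite ?(negbTE ev) ?andbF.
Qed.

Lemma ts_value_indicator f F :
  (forall e, e \in E -> excessU (D_arcs E) f e = (e \notin F)%:R) ->
  value f = #|E :\: F|%:R.
Proof.
move=> ex; rewrite /ts_value /D_U (big_setID F) /= big1 ?add0r => [|e].
  rewrite -sumr_const; apply: eq_bigr => e.
  by rewrite inE => /andP[/negbTE eF eE]; rewrite ex ?eF.
by rewrite inE => /andP[eE eF]; rewrite ex ?eF.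
Qed.

Lemma orientation_of_transshipment f : is_B_ts f ->
  exists F, [/\ F \subset E, fractional_orientation (E :\: F) tau f
             & value f = #|E :\: F|%:R].
Proof.
case=> cap BU BW; pose F := [set e in E | excessU (D_arcs E) f e == 0].
have exF e : e \in E -> excessU (D_arcs E) f e = (e \notin F)%:R.
  by move=> eE; rewrite inE eE /=; have [->|->] : _ \/ _ := BU e eE.
have f0 e v : e \in E -> v \in e -> 0 <= f (e, v).
  by move=> eE ve; case: (cap (e, v)); rewrite // inE eE.
exists F; split; last exact: ts_value_indicator.
  by apply/subsetP => e; rewrite inE => /andP[].
split.
- by move=> e v; rewrite inE => /andP[_ eE]; exact: f0.
- by move=> e; rewrite inE => /andP[eF eE]; rewrite -excessU_arcs // exF // eF.
- move=> v; have [+ _] := BW v (in_setT v); rewrite excessW_arcs lerN2; apply: le_trans.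
  apply: ler_sum_subpred => [e | e /andP[eE ve]]; last exact: f0.
  by rewrite inE -andbA => /and3P[_ -> ->].
Qed.

Lemma transshipment_of_orientation F w :
  fractional_orientation (E :\: F) tau w ->
  exists f, is_B_ts f /\ value f = #|E :\: F|%:R.
Proof.
case=> w0 w1 load; pose f a := if a.1 \in E :\: F then w a else 0.
have exF e : e \in E -> excessU (D_arcs E) f e = (e \notin F)%:R.
  move=> eE; rewrite excessU_arcs // /f /= inE eE andbT.
  have [eF | eF] /= := boolP (e \in F); first by rewrite big1.
  by rewrite w1 // inE eF eE.
exists f; split; last exact: ts_value_indicator.
split => [[e v] | e eE | v _].
- rewrite inE /f /D_cap /= => /andP[eE ve]; case: ifP => // eEF; split; first exact: w0.
  by rewrite -(w1 e eEF) (bigD1 v) //= lerDl sumr_ge0 // => u /andP[/w0 ->].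
- by rewrite /D_BU exF //; case: (e \in F); [left | right].
- rewrite /D_BW excessW_arcs oppr_le0 lerN2; split.
    apply: le_trans (load v); rewrite [X in X <= _]big_mkcond [X in _ <= X]big_mkcond /=.
    apply: ler_sum => e _; rewrite /f !inE /=.
    by case: (e \in F); case: (e \in E); case: (v \in e).
  by apply: sumr_ge0 => e /andP[eE ve]; rewrite /f; case: ifP => // /w0 ->.
Qed.

End Construction.

Lemma ler_cardsD (T : finType) (E F : {set T}) (k : nat) : F \subset E ->
  (#|E|%:R - k%:R <= #|E :\: F|%:R :> rat) = (#|F| <= k)%N.
Proof.
move=> sFE; rewrite cardsD (setIidPr sFE) natrB ?subset_leq_card //.
by rewrite lerD2l lerN2 ler_nat.
Qed.

Theorem lemma6 (V : finType) (E : {set {set V}}) (HE : simple_edges E)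
  (tau : rat) (Htau : 0 <= tau) (k : nat) :
  (exists f : {set V} * V -> rat,
      is_B_transshipment (D_U E) (D_W V) (D_arcs E) (@D_cap V) (@D_BU V) (@D_BW V tau) f /\
      (#|E|%:R - k%:R <= ts_value (D_U E) (D_arcs E) f))
  <->
  (exists F : {set {set V}},
      [/\ F \subset E, (#|F| <= k)%N & rho_star (del_edges E F) <= tau]).
Proof.
rewrite /del_edges; split.
- move=> [f [ts val]]; have [F [sFE orient valF]] := orientation_of_transshipment ts.
  exists F; split => //; first by rewrite -(ler_cardsD k sFE) -valF.
  apply/(rho_star_leP (simple_edgesD HE) Htau) => S E'.
  exact: orientation_subgraph_bound orient.
- move=> [F [sFE Fk /(rho_star_leP (simple_edgesD HE) Htau) bound]].
  have [w orient] := orientation_of_subgraph_bound (simple_edgesD HE) Htau bound.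
  have [f [ts valF]] := transshipment_of_orientation orient.
  by exists f; rewrite valF ler_cardsD.
Qed.
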